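(* Let $n\geq 8$, let $\mathfrak{X}=\{A_0,A_1,A_2\}$ be a non-symmetric class $2$ association scheme of order $n-1$, let $B_1$ be the $(2n-1)\times(2n-1)$ matrix defined from $A_1$ as in the context, and let $\mathfrak{Y}=\{I_{2n-1},B_1,B_1^T\}$. Then each of the sets $\{1,\dots,n-1\}$, $\{n\}$, $\{n+1,\dots,2n-1\}$ is mapped to itself by every element of $\operatorname{Aut}(\mathfrak{Y})$.
   Context: An association scheme of order $N$ is a set $\{A_0,\dots,A_d\}$ of $N\times N$ $0/1$-matrices such that $A_0=I_N$, $\sum_i A_i=J_N$ (all-ones matrix), each $A_i^T$ is in the set, and each product $A_iA_j$ is a linear combination of the $A_k$. It is non-symmetric of class $2$ if $d=2$ and $A_1^T=A_2\neq A_1$. The automorphism group of $\{A_0,\dots,A_d\}$ is $\{\sigma\in S_N : P_\sigma^TA_iP_\sigma=A_i \text{ for all } i\}$, where $P_\sigma$ is the permutation matrix of $\sigma$. Definition of $B_1$ (indices $1\le i,j\le n-1$): $(B_1)_{i,j}=(A_1)_{ij}$, $(B_1)_{i,n}=0$, $(B_1)_{i,n+j}=(A_0+A_1)_{ij}$; $(B_1)_{n,j}=1$, $(B_1)_{n,n}=0$, $(B_1)_{n,n+j}=0$; $(B_1)_{n+i,j}=(A_1)_{ij}$, $(B_1)_{n+i,n}=1$, $(B_1)_{n+i,n+j}=(A_2)_{ij}$. In block form, $B_1=\begin{bmatrix} A_1 & \mathbf{0} & A_0+A_1\\ \mathbf{1}^T & 0 & \mathbf{0}^T\\ A_1 & \mathbf{1}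 & A_2\end{bmatrix}$ with blocks indexed by $\{1,\dots,n-1\},\{n\},\{n+1,\dots,2n-1\}$. It is a fact that $\mathfrak{Y}$ is a non-symmetric class $2$ association scheme. *)

From HB Require Import structures.
From mathcomp Require Import all_boot all_order all_algebra all_fingroup.
Set Implicit Arguments. Unset Strict Implicit. Unset Printing Implicit Defensive.
Import GRing.Theory.
Local Open Scope ring_scope.

Definition is_assoc_scheme (N d : nat) (A : 'I_d.+1 -> 'M[rat]_N) : Prop :=
  [/\ (forall i x y, A i x y = 0 \/ A i x y = 1),
      A ord0 = 1%:M,
      \sum_(i < d.+1) A i = const_mx 1,
      (forall i, exists j, (A i)^T = A j) &
      (forall i j, exists c : 'I_d.+1 -> rat, A i *m A j = \sum_(k < d.+1) c k *: A k)].

Definition fam3 (N : nat) (A0 A1 A2 : 'M[rat]_N) : 'I_3 -> 'M[rat]_N :=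
  fun i => match val i with 0 => A0 | 1 => A1 | _ => A2 end.

Definition nonsym_class2_scheme (N : nat) (A0 A1 A2 : 'M[rat]_N) : Prop :=
  is_assoc_scheme (fam3 A0 A1 A2) /\ A1^T = A2 /\ A2 <> A1.

Definition aut_scheme (N d : nat) (A : 'I_d.+1 -> 'M[rat]_N) : {set {perm 'I_N}} :=
  [set s : {perm 'I_N} | [forall i, (perm_mx s)^T *m A i *m perm_mx s == A i]].

(* Entry of an m x m matrix at natural-number indices (0 outside range). *)
Definition mxe (m : nat) (A : 'M[rat]_m) (i j : nat) : rat :=
  match @insub _ (fun k => k < m)%N _ i, @insub _ (fun k => k < m)%N _ j with
  | Some i', Some j' => A i' j'
  | _, _ => 0
  end.

(* The matrix B_1 of order 2n-1, with 0-based indices: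
   block 1 = {0,...,n-2} (paper's {1,...,n-1}), block 2 = {n-1} (paper's {n}),
   block 3 = {n,...,2n-2} (paper's {n+1,...,2n-1}). *)
Definition B1 (n : nat) (A0 A1 A2 : 'M[rat]_(n.-1)) : 'M[rat]_(n.*2.-1) :=
  \matrix_(i, j)
    let i := val i in let j := val j in
    if (i < n.-1)%N then
      (if (j < n.-1)%N then mxe A1 i j
       else if j == n.-1 then 0
       else mxe (A0 + A1) i (j - n))
    else if i == n.-1 then
      (if (j < n.-1)%N then 1 else 0)
    else
      (if (j < n.-1)%N then mxe A1 (i - n) j
       else if j == n.-1 then 1
       else mxe A2 (i - n) (j - n)).

Definition blk1 (n : nat) : {set 'I_(n.*2.-1)} := [set i | (val i < n.-1)%N].
Definition blk2 (n : nat) : {set 'I_(n.*2.-1)} := [set i | val i == n.-1].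
Definition blk3 (n : nat) : {set 'I_(n.*2.-1)} := [set i | (n.-1 < val i)%N].

(* Let R be the tournament on n - 1 vertices whose arcs are the 1-entries of
   A1.  Since A1 A1^T lies in the span of the scheme, R is doubly regular:
   every vertex has k out- and k in-neighbours, any two distinct vertices
   have l common out-neighbours, and double counting gives k = 2 l + 1, so
   l + 2 <= k as soon as n >= 8.

   The digraph of B1 consists of a center c (the vertex n), pointing to a
   copy X of R and pointed to by a copy Y of R reversed.  Call v
   pair-covered if for every u <> v some third vertex w dominates the
   common out-neighbourhood of v and u.  The center is pair-covered while,
   by the counting above, no vertex of X or Y is.  Being pair-covered is an
   automorphism invariant, so every automorphism fixes c, hence also its
   out-neighbourhood X = {1..n-1} and its in-neighbourhood Y = {n+1..2n-1}. *)

From HB Require Import structures.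
From mathcomp Require Import all_boot all_order all_algebra all_fingroup.
From mathcomp Require Import zify.
Set Implicit Arguments. Unset Strict Implicit. Unset Printing Implicit Defensive.
Import GRing.Theory Num.Theory.

Section Tournaments.
Variables (T : finType) (R : rel T).

Definition outset (a : T) : {set T} := [set z | R a z].
Definition inset (a : T) : {set T} := [set z | R z a].
Definition common (a b : T) : {set T} := [set z | R a z && R b z].

Lemma double_count (P : pred T) :
  \sum_b #|[set z | P z && R b z]| = \sum_(z | P z) #|inset z|.
Proof.
under eq_bigr => b _ do rewrite -sum1dep_card.
rewrite (exchange_big_dep P) => [|b z _ /andP[] //].
apply: eq_bigr => z Pz; rewrite -sum1dep_card.
by apply: eq_bigl => b; rewrite Pz.
Qed.

Record tournament : Prop := Tournament {
  tour_irr : forall a, R a a = false;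
  tour_anti : forall a b, a != b -> R b a = ~~ R a b }.

Definition doubly_regular (k l : nat) : Prop :=
  [/\ forall a, #|outset a| = k, forall a, #|inset a| = k &
      forall a b, a != b -> #|common a b| = l].

Hypothesis tourR : tournament.

Lemma tour_asym a b : R a b -> R b a = false.
Proof.
move=> Rab; have ab : a != b by apply: contraTneq Rab => ->; rewrite tour_irr.
by rewrite (tour_anti tourR ab) Rab.
Qed.

Lemma tour_total a b : a != b -> R a b || R b a.
Proof. by move=> ab; rewrite (tour_anti tourR ab); case: (R a b). Qed.

Lemma common_sym a b : common a b = common b a.
Proof. by apply/setP => z; rewrite !inE andbC. Qed.

Lemma common_diag a : common a a = outset a.
Proof. by apply/setP => z; rewrite !inE andbb. Qed.

(* Every vertex other than [a] is an out- or an in-neighbour of [a]. *)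
Lemma card_out_in a : #|outset a| + #|inset a| = #|T|.-1.
Proof.
rewrite -(cardsC1 a) -(cardsID (outset a) [set~ a]).
congr (_ + _); apply: eq_card => z.
  by rewrite !inE; case: eqP => // ->; rewrite tour_irr.
rewrite !inE andbC; have [->|za] := eqVneq z a; first by rewrite tour_irr.
by rewrite (tour_anti tourR za) negbK.
Qed.

Lemma regular_tournament k : (forall a, #|outset a| = k) -> (0 < #|T|)%N ->
  (forall a, #|inset a| = k) /\ k.*2 = #|T|.-1.
Proof.
move=> outk T0.
have ink a : #|inset a| = #|T|.-1 - k by rewrite -(card_out_in a) outk addKn.
have arcs : \sum_(a : T) #|outset a| = \sum_(a : T) #|inset a|.
  by rewrite -(double_count predT); apply: eq_bigr => a _; apply: eq_card => z; rewrite !inE.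
move: arcs; rewrite !(eq_bigr _ (fun a _ => outk a)) (eq_bigr _ (fun a _ => ink a)).
rewrite !sum_nat_const => /eqP; rewrite eqn_pmul2l // => /eqP kE.
by split => [a|]; rewrite ?ink -?kE; lia.
Qed.

(* A tournament on at least 7 vertices with constant out-degree [k] and
   constant common out-degree [l] is doubly regular, and [k = 2 l + 1]
   forces [l + 2 <= k]. *)
Lemma doubly_regular_params k l :
  (forall a, #|outset a| = k) -> (forall a b, a != b -> #|common a b| = l) ->
  (7 <= #|T|)%N -> doubly_regular k l /\ (l.+2 <= k)%N.
Proof.
move=> outk commonl T7; have T0 : (0 < #|T|)%N by lia.
have [ink kE] := regular_tournament outk T0.
split=> //; have /card_gt0P[a0 _] := T0.
have : k + #|T|.-1 * l = k * k.
  have := double_count (R a0); rewrite (bigD1 a0) //= -/(common a0 a0).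
  rewrite common_diag outk (eq_bigr (fun=> l)) => [|b ba0]; last first.
    by apply: commonl; rewrite eq_sym.
  rewrite sum_nat_const cardC1 => ->.
  by rewrite (eq_bigr (fun=> k)) // sum_nat_cond_const -/(outset a0) outk.
have k3 : (3 <= k)%N by lia.
rewrite -kE => count; have : k * l.*2.+1 = k * k by lia.
by move/eqP; rewrite eqn_pmul2l; [move=> /eqP; lia | lia].
Qed.

End Tournaments.

Section PairCover.
Variables (V : finType) (E : rel V).

Definition covers (v u w : V) : Prop := forall z, E v z -> E u z -> E w z.

Definition pair_covered (v : V) : Prop :=
  forall u, u != v -> exists w, [/\ w != u, w != v & covers v u w].

Lemma pair_covered_aut (s : {perm V}) :
  (forall a b, E (s a) (s b) = E a b) -> forall v, pair_covered v -> pair_covered (s v).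
Proof.
move=> sE v cov u us.
have [|w [wu wv dom]] := cov ((s^-1)%g u); first by apply: contraNneq us => <-; rewrite permKV.
exists (s w); split; first by apply: contraNneq wu => <-; rewrite permK.
  by apply: contraNneq wv => /perm_inj ->.
by move=> z; rewrite -(permKV s z) -{1}(permKV s u) !sE; apply: dom.
Qed.

End PairCover.

(* [E] on [V] is built from the tournament [R] on [T] as [B_1] is built from
   [A_1]: [V] consists of a center [c] and two copies [fX], [fY] of [T]; the
   center points to [X] and is pointed to by [Y]; inside [X] the arcs are
   those of [R], inside [Y] those of [R] reversed, [fX a -> fY b] iff [a = b]
   or [R a b], and [fY a -> fX b] iff [R a b]. *)
Record tournament_extension (T V : finType) (R : rel T) (E : rel V) (c : V)
    (fX fY : T -> V) : Prop := Extension {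
  ext_vertex : forall v, [\/ v = c, exists a, v = fX a | exists a, v = fY a];
  ext_cc : E c c = false;
  ext_cX : forall a, E c (fX a);
  ext_cY : forall a, E c (fY a) = false;
  ext_Xc : forall a, E (fX a) c = false;
  ext_Yc : forall a, E (fY a) c;
  ext_XX : forall a b, E (fX a) (fX b) = R a b;
  ext_XY : forall a b, E (fX a) (fY b) = (a == b) || R a b;
  ext_YX : forall a b, E (fY a) (fX b) = R a b;
  ext_YY : forall a b, E (fY a) (fY b) = R b a }.

Section Extension.
Variables (T V : finType) (R : rel T) (E : rel V) (c : V) (fX fY : T -> V).
Variables (k l : nat).
Hypotheses (tourR : tournament R) (regR : doubly_regular R k l).
Hypotheses (lk : (l.+2 <= k)%N) (ext : tournament_extension R E c fX fY).

Let EcX := ext_cX ext.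
Let EcY := ext_cY ext.
Let EXc := ext_Xc ext.
Let EYc := ext_Yc ext.
Let EXX := ext_XX ext.
Let EXY := ext_XY ext.
Let EYX := ext_YX ext.
Let EYY := ext_YY ext.

(* Vertices of the three kinds are distinct: their arcs to or from the
   center differ. *)
Lemma ext_XnY a b : fX a != fY b.
Proof. by apply/eqP => eab; have := EYc b; rewrite -eab EXc. Qed.

Lemma ext_Yn_center a : fY a != c.
Proof. by apply/eqP => ea; have := EYc a; rewrite ea (ext_cc ext). Qed.

Lemma ext_Xn_center a : fX a != c.
Proof. by apply/eqP => ea; have := EcX a; rewrite ea (ext_cc ext). Qed.

Lemma ext_center_out z : E c z -> exists b, z = fX b.
Proof.
by case: (ext_vertex ext z) => [->|//|[b ->]]; rewrite ?(ext_cc ext) ?EcY.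
Qed.

Lemma out_neighbour a : exists b, R a b.
Proof.
have [outk _ _] := regR; have : (0 < #|outset R a|)%N by rewrite outk; lia.
by case/card_gt0P => b; rewrite inE; exists b.
Qed.

Lemma in_neighbour a : exists b, R b a.
Proof.
have [_ ink _] := regR; have : (0 < #|inset R a|)%N by rewrite ink; lia.
by case/card_gt0P => b; rewrite inE; exists b.
Qed.

(* Sets of common out-neighbours have only [l] elements, whereas an
   out-neighbourhood with one vertex removed has [k - 1 > l] elements. *)
Lemma common_bound x b (S : {set T}) :
  x != b -> S \subset common R x b -> (#|S| <= l)%N.
Proof. by have [_ _ cl] := regR => xb /subset_leq_card; rewrite cl. Qed.

Lemma card_outsetD1 x a : R x a -> #|outset R x :\ a| = k.-1.
Proof.
have [outk _ _] := regR => xa; have := cardsD1 a (outset R x).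
by rewrite inE xa outk add1n => ->.
Qed.

(* The center is pair-covered: [fY a] covers it with [fX a] and vice versa. *)
Lemma center_pair_covered : pair_covered E c.
Proof.
move=> u uc; case: (ext_vertex ext u) => [ec|[a ->]|[a ->]]; first by rewrite ec eqxx in uc.
- exists (fY a); split; rewrite ?ext_Yn_center 1?eq_sym ?ext_XnY //.
  by move=> z /ext_center_out[b ->]; rewrite EXX EYX.
- exists (fX a); split; rewrite ?ext_Xn_center ?ext_XnY //.
  by move=> z /ext_center_out[b ->]; rewrite EYX EXX.
Qed.

(* A vertex [fX x] is not pair-covered: take [u = fY a] with [x -> a]. *)
Lemma X_not_pair_covered x : ~ pair_covered E (fX x).
Proof.
move=> cov; have [a xa] := out_neighbour x.
have [|w [wu wx dom]] := cov (fY a); first by rewrite eq_sym ext_XnY.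
have xYx : E (fX x) (fY x) by rewrite EXY eqxx.
have aYx : E (fY a) (fY x) by rewrite EYY.
have := dom _ xYx aYx.
case: (ext_vertex ext w) => [wc|[b wb]|[b wb]]; subst w; first by rewrite EcY.
- (* [w = fX b] with [b -> x]: then [outset x :\ a] is common to [x], [b]. *)
  have bx : b != x by apply: contraNneq wx => ->.
  rewrite EXY (negbTE bx) /= => bRx.
  suff : (k.-1 <= l)%N by lia.
  rewrite -(card_outsetD1 xa); apply: (@common_bound x b); first by rewrite eq_sym.
  apply/subsetP => z; rewrite !inE => /andP[za xz]; rewrite xz /=.
  case/orP: (tour_total tourR za) => [zRa|aRz].
  + have := dom (fY z); rewrite !EXY EYY xz zRa orbT => /(_ isT isT).
    by case/orP => // /eqP bz; rewrite -bz (tour_asym tourR bRx) in xz.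
  + by have := dom (fX z); rewrite !EXX EYX xz aRz => /(_ isT isT).
- (* [w = fY b] with [x -> b]: the endpoint [b] of the arc between [a] and
     [b] is a common out-neighbour not reached from [w]. *)
  have ba : b != a by apply: contraNneq wu => ->.
  rewrite EYY => xRb.
  case/orP: (tour_total tourR ba) => [bRa|aRb].
  + by have := dom (fY b); rewrite EXY !EYY xRb bRa (tour_irr tourR) orbT => /(_ isT isT).
  + by have := dom (fX b); rewrite EXX !EYX xRb aRb (tour_irr tourR) => /(_ isT isT).
Qed.

(* A vertex [fY i] is not pair-covered: take [u = fX j] with [j -> i]. *)
Lemma Y_not_pair_covered i : ~ pair_covered E (fY i).
Proof.
move=> cov; have [j ji] := in_neighbour i.
have [|w [wu wi dom]] := cov (fX j); first by rewrite ext_XnY.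
have iYj : E (fY i) (fY j) by rewrite EYY.
have jYj : E (fX j) (fY j) by rewrite EXY eqxx.
have := dom _ iYj jYj.
case: (ext_vertex ext w) => [wc|[b wb]|[b wb]]; subst w; first by rewrite EcY.
- (* [w = fX b] with [b -> j]: then [outset j :\ i] is common to [j], [b]. *)
  have bj : b != j by apply: contraNneq wu => ->.
  rewrite EXY (negbTE bj) /= => bRj.
  suff : (k.-1 <= l)%N by lia.
  rewrite -(card_outsetD1 ji); apply: (@common_bound j b); first by rewrite eq_sym.
  apply/subsetP => z; rewrite !inE => /andP[zi jz]; rewrite jz /=.
  case/orP: (tour_total tourR zi) => [zRi|iRz].
  + have := dom (fY z); rewrite !EXY EYY jz zRi orbT => /(_ isT isT).
    by case/orP => // /eqP bz; rewrite -bz (tour_asym tourR bRj) in jz.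
  + by have := dom (fX z); rewrite !EXX EYX jz iRz => /(_ isT isT).
-
  have bi : b != i by apply: contraNneq wi => ->.
  rewrite EYY => jRb.
  case/orP: (tour_total tourR bi) => [bRi|iRb]; last first.
    by have := dom (fX b); rewrite !EYX EXX jRb iRb (tour_irr tourR) => /(_ isT isT).
  (* With [b -> i], the set [i |: common j i] of size [l + 1] is common to
     [j] and [b]. *)
  suff : (#|i |: common R j i| <= l)%N.
    have [_ _ cl] := regR; have ji' : j != i by apply: contraTneq ji => ->; rewrite tour_irr.
    by rewrite cardsU1 cl // inE (tour_irr tourR) andbF add1n ltnn.
  apply: (@common_bound j b); first by apply: contraTneq jRb => ->; rewrite (tour_irr tourR).
  apply/subsetP => z; rewrite !inE => /orP[/eqP->|/andP[jz iz]]; first by rewrite ji bRi.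
  by have := dom (fX z); rewrite !EYX EXX jz iz => /(_ isT isT) ->.
Qed.

(* Automorphisms of [E] fix the center, the only pair-covered vertex. *)
Lemma ext_aut_fixes_center (s : {perm V}) :
  (forall a b, E (s a) (s b) = E a b) -> s c = c.
Proof.
move=> sE; have := pair_covered_aut sE center_pair_covered.
case: (ext_vertex ext (s c)) => [//|[a ->]|[a ->]].
  by move/X_not_pair_covered.
by move/Y_not_pair_covered.
Qed.

End Extension.

Local Open Scope ring_scope.

Section SchemeTournament.
Variables (m : nat) (A0 A1 A2 : 'M[rat]_m).
Hypothesis scheme : nonsym_class2_scheme A0 A1 A2.

Definition scheme_rel : rel 'I_m := fun a b => A1 a b == 1.
Local Notation R := scheme_rel.

Lemma scheme_A0 : A0 = 1%:M.
Proof. by case: scheme => -[]. Qed.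

Lemma scheme_A2 : A2 = A1^T.
Proof. by case: scheme => _ []. Qed.

Lemma scheme_A1E a b : A1 a b = (R a b)%:R.
Proof.
case: scheme => -[A01 _ _ _ _] _; rewrite /R.
by case: (A01 (@Ordinal 3 1 isT) a b) => /= ->; rewrite ?eqxx // eq_sym oner_eq0.
Qed.

(* [A0 + A1 + A2 = J], read entrywise. *)
Lemma scheme_partition a b : (a == b)%:R + A1 a b + A1 b a = 1 :> rat.
Proof.
case: scheme => -[_ _ sumJ _ _] _.
have sumJab : A0 a b + A1 a b + A2 a b = 1.
  have := congr1 (fun M : 'M[rat]_m => M a b) sumJ.
  by rewrite summxE !big_ord_recr big_ord0 /= add0r mxE.
by rewrite -[RHS]sumJab scheme_A0 scheme_A2 !mxE.
Qed.

Lemma scheme_tournament : tournament R.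
Proof.
split=> [a|a b ab].
  have := scheme_partition a a; rewrite eqxx scheme_A1E.
  by case: (R a a) => //= /eqP; rewrite -subr_eq0 addrK.
have := scheme_partition a b; rewrite (negbTE ab) add0r !scheme_A1E.
by case: (R a b); case: (R b a) => //= /eqP; rewrite ?addr0 // -subr_eq0 addrK.
Qed.

Lemma scheme_common_card a b : (#|common R a b|)%:R = (A1 *m A1^T) a b.
Proof.
rewrite -sum1dep_card natr_sum big_mkcond mxE /=; apply: eq_bigr => z _.
by rewrite !mxE !scheme_A1E; case: (R a z); case: (R b z); rewrite ?mul0r ?mulr0 ?mul1r.
Qed.

(* Since [A1 A2] lies in the span of the scheme, the number of common
   out-neighbours of [a] and [b] only depends on how [a] and [b] are
   related. *)
Lemma scheme_intersection : exists c0 c1 c2 : rat, forall a b,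
  (#|common R a b|)%:R = c0 * (a == b)%:R + c1 * (R a b)%:R + c2 * (R b a)%:R.
Proof.
case: scheme => -[_ _ _ _ mul] _.
pose i1 := @Ordinal 3 1 isT; pose i2 := @Ordinal 3 2 isT.
have [c Hc] := mul i1 i2.
have sum3 (F : 'I_3 -> 'M[rat]_m) : \sum_(i < 3) F i = F ord0 + F i1 + F i2.
  by rewrite !big_ord_recr big_ord0 /= add0r; congr (F _ + F _ + F _); apply: val_inj.
exists (c ord0), (c i1), (c i2) => a b.
rewrite scheme_common_card -scheme_A2 -[A1 *m A2]/(fam3 A0 A1 A2 i1 *m fam3 A0 A1 A2 i2).
by rewrite Hc sum3 !mxE /= scheme_A0 scheme_A2 !mxE !scheme_A1E.
Qed.

Lemma scheme_doubly_regular : (7 <= m)%N ->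
  exists k l, doubly_regular R k l /\ (l.+2 <= k)%N.
Proof.
move=> m7; have tourR := scheme_tournament.
have [c0 [c1 [c2 count]]] := scheme_intersection.
have outc a : (#|outset R a|)%:R = c0.
  by rewrite -common_diag count eqxx (tour_irr tourR) !mulr0 !addr0 mulr1.
have commonc a b : a != b -> (#|common R a b|)%:R = c1.
  move=> ab; case/orP: (tour_total tourR ab) => [Rab|Rba].
    by rewrite count (negbTE ab) Rab (tour_asym tourR Rab) !mulr0 add0r addr0 mulr1.
  by rewrite common_sym count eq_sym (negbTE ab) Rba (tour_asym tourR Rba) !mulr0 add0r addr0 mulr1.
have m1 : (1 < m)%N by lia.
pose a0 := Ordinal (ltnW m1); pose a1 := Ordinal m1.
exists #|outset R a0|, #|common R a0 a1|; apply: doubly_regular_params => //.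
- by move=> a; apply/eqP; rewrite -(eqr_nat rat) !outc.
- by move=> a b ab; apply/eqP; rewrite -(eqr_nat rat) !commonc.
- by rewrite card_ord.
Qed.

End SchemeTournament.

Lemma aut_scheme_entry N d (A : 'I_d.+1 -> 'M[rat]_N) (s : {perm 'I_N}) i :
  s \in aut_scheme A -> forall a b, A i (s a) (s b) = A i a b.
Proof.
rewrite inE => /forallP/(_ i)/eqP sA a b.
have conjE : (perm_mx s)^T *m A i *m perm_mx s = col_perm s^-1 (row_perm s^-1 (A i)).
  by rewrite col_permE row_permE tr_perm_mx invgK.
by rewrite -{1}sA conjE !mxE !permK.
Qed.

Lemma aut_fixed_outset (V : finType) (E : rel V) (s : {perm V}) c :
  (forall a b, E (s a) (s b) = E a b) -> s c = c ->
  s @: [set z | E c z] = [set z | E c z].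
Proof.
move=> sE sc; apply/setP => z; rewrite inE; apply/imsetP/idP => [[y]|Ecz].
  by rewrite inE => Ecy ->; rewrite -sc sE.
by exists (s^-1 z)%g; rewrite ?permKV // inE -sE permKV sc.
Qed.

(* Dually, applied to the reversed digraph: the in-neighbourhood of [c] is
   stabilised as well. *)
Lemma aut_fixed_inset (V : finType) (E : rel V) (s : {perm V}) c :
  (forall a b, E (s a) (s b) = E a b) -> s c = c ->
  s @: [set z | E z c] = [set z | E z c].
Proof. by move=> sE; apply: (aut_fixed_outset (E := fun a b => E b a)) => a b; apply: sE. Qed.

(* The vertices of [B1] for [n = m + 1]: [B1_left a = a], the center
   [B1_center = m] and [B1_right a = a + m + 1]. *)
Lemma B1_left_subproof m (a : 'I_m) : (a < m.+1.*2.-1)%N.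
Proof. by have := ltn_ord a; lia. Qed.

Lemma B1_right_subproof m (a : 'I_m) : (a + m.+1 < m.+1.*2.-1)%N.
Proof. by have := ltn_ord a; lia. Qed.

Lemma B1_center_subproof m : (m < m.+1.*2.-1)%N.
Proof. by lia. Qed.

Definition B1_left m (a : 'I_m) := Ordinal (B1_left_subproof a).
Definition B1_right m (a : 'I_m) := Ordinal (B1_right_subproof a).
Definition B1_center m := Ordinal (B1_center_subproof m).

Lemma B1_blk2 m : blk2 m.+1 = [set B1_center m].
Proof. by apply/setP => z; rewrite !inE; apply/eqP/eqP => [zm|->//]; apply: val_inj. Qed.

Definition B1_rel n (A0 A1 A2 : 'M[rat]_n.-1) : rel 'I_(n.*2.-1) :=
  fun v z => B1 A0 A1 A2 v z == 1.

Lemma mxeE m (A : 'M[rat]_m) (a b : 'I_m) : mxe A a b = A a b.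
Proof.
rewrite /mxe; case: insubP => [a' _ ea|]; last by rewrite ltn_ord.
by case: insubP => [b' _ eb|]; [congr (A _ _); apply: val_inj | rewrite ltn_ord].
Qed.

Section B1Extension.
Variables (m : nat) (A0 A1 A2 : 'M[rat]_m).
Hypothesis scheme : nonsym_class2_scheme A0 A1 A2.

Lemma B1_extension : tournament_extension (scheme_rel A1) (@B1_rel m.+1 A0 A1 A2)
  (B1_center m) (@B1_left m) (@B1_right m).
Proof.
have irr := tour_irr (scheme_tournament scheme).
have bool_eq1 (x : bool) : ((x%:R : rat) == 1) = x.
  by case: x; rewrite ?eqxx // eq_sym oner_eq0.
have rlt (a : 'I_m) : (a + m.+1 < m)%N = false by lia.
have req (a : 'I_m) : (a + m.+1 == m)%N = false by lia.
have rsub (a : 'I_m) : (a + m.+1 - m.+1)%N = a by lia.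
constructor.
- move=> [v lv]; case: (ltngtP v m) => vm.
  + by constructor 2; exists (Ordinal vm); apply: val_inj.
  + have lv' : (v - m.+1 < m)%N by lia.
    by constructor 3; exists (Ordinal lv'); apply: val_inj => /=; lia.
  + by constructor 1; apply: val_inj.
all: try move=> a; try move=> b; rewrite /B1_rel /B1 mxE /= ?ltn_ord ?ltnn ?eqxx ?rlt ?req ?rsub ?mxeE //=.
all: rewrite ?(scheme_A0 scheme) ?(scheme_A2 scheme) !mxE ?(scheme_A1E scheme) //.
have [<-|ab] := eqVneq a b; first by rewrite irr addr0 eqxx.
by rewrite add0r bool_eq1.
Qed.

Local Notation E := (@B1_rel m.+1 A0 A1 A2).

Lemma B1_blk1 : blk1 m.+1 = [set z | E (B1_center m) z].
Proof.
have ext := B1_extension; apply/setP => z; rewrite !inE.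
case: (ext_vertex ext z) => [->|[a ->]|[a ->]].
- by rewrite (ext_cc ext) /= ltnn.
- by rewrite (ext_cX ext) /= ltn_ord.
- by rewrite (ext_cY ext) /=; lia.
Qed.

Lemma B1_blk3 : blk3 m.+1 = [set z | E z (B1_center m)].
Proof.
have ext := B1_extension; apply/setP => z; rewrite !inE.
case: (ext_vertex ext z) => [->|[a ->]|[a ->]].
- by rewrite (ext_cc ext) /= ltnn.
- by rewrite (ext_Xc ext) /=; have := ltn_ord a; lia.
- by rewrite (ext_Yc ext) /=; lia.
Qed.

End B1Extension.

Unset Implicit Arguments.

Theorem lemma2 (n : nat) (A0 A1 A2 : 'M[rat]_(n.-1)) :
  (8 <= n)%N ->
  nonsym_class2_scheme A0 A1 A2 ->
  forall s : {perm 'I_(n.*2.-1)},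
    s \in aut_scheme (fam3 1%:M (B1 A0 A1 A2) (B1 A0 A1 A2)^T) ->
    [/\ s @: blk1 n = blk1 n, s @: blk2 n = blk2 n & s @: blk3 n = blk3 n].
Proof.
case: n A0 A1 A2 => [//|m] A0 A1 A2 m7 scheme s.
move=> /(aut_scheme_entry (@Ordinal 3 1 isT)) sB.
have sE a b : B1_rel A0 A1 A2 (s a) (s b) = B1_rel A0 A1 A2 a b by rewrite /B1_rel sB.
have [k [l [regR lk]]] := scheme_doubly_regular scheme m7.
have ext := B1_extension scheme.
have sc := ext_aut_fixes_center (scheme_tournament scheme) regR lk ext sE.
rewrite (B1_blk1 scheme) (B1_blk2 m) (B1_blk3 scheme) imset_set1 sc.
by rewrite (aut_fixed_outset sE sc) (aut_fixed_inset sE sc).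
Qed.
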